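(* Let $\Sigma$ be a finite alphabet, let $T = T_1\cdots T_n$ (the text) and $P = P_1\cdots P_m$ (the pattern) be strings over $\Sigma$, and let $P^G$ be the $\mathcal P$-graph of $P$ (defined in the context). Then for every $i \in [1..n]$, $P$ swap matches $T$ at location $i$ if and only if $P^G$ matches $T$ at position $i$.
   Context: A swap permutation for a string $X = X_1\cdots X_m$ is a permutation $\pi$ of $\{1,\ldots,m\}$ such that (1) if $\pi(i)=j$ then $\pi(j)=i$; (2) $\pi(i)\in\{i-1,i,i+1\}$ for all $i$; (3) if $\pi(i)\neq i$ then $X_{\pi(i)}\neq X_i$. The swapped version is $\pi(X) = X_{\pi(1)}X_{\pi(2)}\cdots X_{\pi(m)}$. $P$ swap matches $T$ at location $i$ (identified by the end position of the match) if there is a swapped version $P'$ of $P$ with $P'_j = T_{i-m+j}$ for all $j\in[1..m]$ (in particular this requires $i\ge m$, so that all these text positions exist). The $\mathcal P$-graph $P^G=(V^P,E^P)$ of $P$ is the directed graph whose vertices are entries of a $3\times m$ array $M$ with rows indexed $-1,0,+1$: the vertices are $M[-1,i]$ for $2\le i\le m$ with label $P_{i-1}$; $M[0,i]$ for $1\le i\le m$ with label $P_i$; and $M[+1,i]$ for $1\le i\le m-1$ with label $P_{i+1}$. The edges are: $(M[-1,i],M[0,i+1])$ for $2\le i\le m-1$; $(M[-1,i],M[+1,i+1])$ for $2\le i\le m-2$; $(M[0,i],M[0,i+1])$ for $1\le i\le m-1$; $(M[0,i],M[+1,i+1])$ for $1\le i\le m-2$; and $(M[+1,i],M[-1,i+1])$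 for $1\le i\le m-1$. $P^G$ matches $T$ at position $i\in[1..n]$ if there is a directed path $u_1u_2\cdots u_m$ in $P^G$ (consecutive vertices joined by edges) with $u_1\in\{M[0,1],M[+1,1]\}$, $u_m\in\{M[-1,m],M[0,m]\}$, and $\mathrm{label}(u_j)=T_{i-m+j}$ for all $j\in[1..m]$ (again requiring all these text positions to exist). *)

(* Strings are sequences over a finite alphabet S : finType.
   Positions are 1-based as in the paper. *)
From mathcomp Require Import all_boot all_fingroup.
Set Implicit Arguments. Unset Strict Implicit. Unset Printing Implicit Defensive.

Section Defs.
Variable S : finType.

Definition at_ (X : seq S) (k : nat) : option S := nth None (map Some X) k.-1.

(* Swap permutation of X = X_1..X_m; the element j : 'I_m stands for position j+1. *)
Definition swap_perm (X : seq S) (pi : {perm 'I_(size X)}) : Prop :=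
  [/\ (forall i, pi (pi i) = i),
      (forall i, (val (pi i)).+1 = val i \/ val (pi i) = val i \/ val (pi i) = (val i).+1)
    & (forall i, pi i <> i -> at_ X (val (pi i)).+1 <> at_ X (val i).+1)].

(* P swap matches T at location i (end position): some swapped version
   P' = P_{pi(1)} .. P_{pi(m)} satisfies P'_j = T_{i-m+j} for j in [1..m]. *)
Definition swap_match (P T : seq S) (i : nat) : Prop :=
  size P <= i /\
  exists pi : {perm 'I_(size P)}, swap_perm pi /\
    forall j : 'I_(size P), at_ P (val (pi j)).+1 = at_ T (i - size P + (val j).+1).

Inductive row := Rm | R0 | Rp.
Definition vertex : Type := (row * nat)%type.

Definition in_V (P : seq S) (v : vertex) : bool :=
  let m := size P in
  match v with
  | (Rm, i) => (2 <= i) && (i <= m)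
  | (R0, i) => (1 <= i) && (i <= m)
  | (Rp, i) => (1 <= i) && (i <= m - 1)
  end.

Definition label (P : seq S) (v : vertex) : option S :=
  match v with
  | (Rm, i) => at_ P i.-1
  | (R0, i) => at_ P i
  | (Rp, i) => at_ P i.+1
  end.

Definition edge (P : seq S) (u v : vertex) : bool :=
  let m := size P in
  match u, v with
  | (Rm, i), (R0, i') => (i' == i.+1) && (2 <= i) && (i <= m - 1)
  | (Rm, i), (Rp, i') => (i' == i.+1) && (2 <= i) && (i <= m - 2)
  | (R0, i), (R0, i') => (i' == i.+1) && (1 <= i) && (i <= m - 1)
  | (R0, i), (Rp, i') => (i' == i.+1) && (1 <= i) && (i <= m - 2)
  | (Rp, i), (Rm, i') => (i' == i.+1) && (1 <= i) && (i <= m - 1)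
  | _, _ => false
  end.

Definition graph_match (P T : seq S) (i : nat) : Prop :=
  let m := size P in
  m <= i /\
  exists u : nat -> vertex,
    [/\ (forall j, 1 <= j <= m -> in_V P (u j)),
        (forall j, 1 <= j < m -> edge P (u j) (u j.+1)),
        (u 1 = (R0, 1) \/ u 1 = (Rp, 1)),
        (u m = (Rm, m) \/ u m = (R0, m))
      & (forall j, 1 <= j <= m -> label P (u j) = at_ T (i - m + j))].

End Defs.

From mathcomp Require Import all_boot all_fingroup.
From mathcomp Require Import zify.
Set Implicit Arguments. Unset Strict Implicit. Unset Printing Implicit Defensive.

(* A swap permutation is the same as an involution h of [0, m) moving every
   position by at most one, up to the letter condition: a transposition of two
   equal letters can be undone without changing the swapped string. A path in
   P^G visits column j in one of the rows -1, 0, +1, i.e. it reads P at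
   position j - 1, j or j + 1; the edges say exactly that row +1 is always
   followed by row -1 and row -1 always preceded by row +1, which is the
   involution condition for this choice of positions. *)

Section SwapMatch.
Variable S : finType.
Implicit Types P T : seq S.

(* Positions are 0-based here: [k] stands for the paper's position [k + 1]. *)
Definition adjacent_involution (m : nat) (h : nat -> nat) :=
  forall k, k < m -> [/\ h k < m, h (h k) = k & k <= (h k).+1 <= k.+2].

Definition window_match P T i (h : nat -> nat) :=
  forall k, k < size P -> at_ P (h k).+1 = at_ T (i - size P + k.+1).

Definition nat_perm m (pi : {perm 'I_m}) (k : nat) : nat :=
  oapp (fun o : 'I_m => val (pi o)) k (insub k).

Lemma nat_permE m (pi : {perm 'I_m}) (o : 'I_m) : nat_perm pi (val o) = val (pi o).
Proof. by rewrite /nat_perm valK. Qed.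

Lemma swap_perm_adjacent P (pi : {perm 'I_(size P)}) :
  swap_perm pi -> adjacent_involution (size P) (nat_perm pi).
Proof.
move=> [pi_inv pi_near _] k lt_k_m; rewrite -[k]/(val (Ordinal lt_k_m)).
rewrite !nat_permE pi_inv; split=> //; first exact: ltn_ord.
by have /= := pi_near (Ordinal lt_k_m); rewrite /=; lia.
Qed.

Definition trim P (h : nat -> nat) (k : nat) : nat :=
  if at_ P (h k).+1 == at_ P k.+1 then k else h k.

Lemma trim_letter P h k : at_ P (trim P h k).+1 = at_ P (h k).+1.
Proof. by rewrite /trim; case: eqP. Qed.

Lemma trim_moves_distinct P h k :
  trim P h k != k -> at_ P (trim P h k).+1 != at_ P k.+1.
Proof. by rewrite /trim; case: ifP => [_|/negbT]; rewrite ?eqxx. Qed.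

Lemma trim_adjacent P m h :
  adjacent_involution m h -> adjacent_involution m (trim P h).
Proof.
move=> h_adj k lt_k_m; have [lt_hk_m hhk near] := h_adj k lt_k_m.
rewrite /trim; case E: (at_ P (h k).+1 == at_ P k.+1); first by split=> //; lia.
by rewrite hhk eq_sym E.
Qed.

Lemma swap_match_of_adjacent P T i h :
  size P <= i -> adjacent_involution (size P) h ->
  (forall k, k < size P -> h k != k -> at_ P (h k).+1 != at_ P k.+1) ->
  window_match P T i h -> swap_match P T i.
Proof.
move=> le_m_i h_adj h_distinct h_win; split=> //.
pose f (o : 'I_(size P)) := insubd o (h o).
have fE o : val (f o) = h o.
  by rewrite val_insubd; case: (h_adj o (ltn_ord o)) => ->.
have fK : involutive f.
  by move=> o; apply: val_inj; rewrite !fE; case: (h_adj o (ltn_ord o)).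
exists (perm (can_inj fK)); split; last by move=> o; rewrite permE fE h_win.
split=> o; rewrite ?permE ?fE.
- exact: fK.
- by case: (h_adj o (ltn_ord o)) => _ _; rewrite /=; lia.
- move=> ne_fo; apply/eqP/h_distinct => //.
  by apply/eqP => eq_ho; apply: ne_fo; apply: val_inj; rewrite fE.
Qed.

Lemma swap_match_iff P T i : swap_match P T i <->
  size P <= i /\ exists h, adjacent_involution (size P) h /\ window_match P T i h.
Proof.
split=> [[le_m_i [pi [pi_swap pi_win]]] | [le_m_i [h [h_adj h_win]]]].
  split=> //; exists (nat_perm pi); split; first exact: swap_perm_adjacent.
  by move=> k lt_k_m; rewrite -[k]/(val (Ordinal lt_k_m)) nat_permE pi_win.
apply: (swap_match_of_adjacent le_m_i (trim_adjacent P h_adj)).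
  by move=> k _; apply: trim_moves_distinct.
by move=> k lt_k_m; rewrite trim_letter h_win.
Qed.

End SwapMatch.

Section GraphMatch.
Variable S : finType.
Implicit Types P T : seq S.

Definition shift (r : row) (k : nat) : nat :=
  match r with Rm => k.-1 | R0 => k | Rp => k.+1 end.

Definition row_of (a k : nat) : row :=
  if a < k then Rm else if a == k then R0 else Rp.

(* [at_ P 0 = at_ P 1] because of [0.-1 = 0], so no side condition on [k]. *)
Lemma label_shift P r k : label P (r, k.+1) = at_ P (shift r k).+1.
Proof. by case: r => //=; case: k. Qed.

Lemma shift_row_of a k : k <= a.+1 <= k.+2 -> shift (row_of a k) k = a.
Proof. by move=> near; rewrite /row_of; case: ltngtP => /= cmp; lia. Qed.

(* [r k] is the row of the path in column [k + 1]. *)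
Definition row_path (m : nat) (r : nat -> row) :=
  [/\ r 0 <> Rm, r m.-1 <> Rp & forall k, k.+1 < m -> r k = Rp <-> r k.+1 = Rm].

Lemma row_path_Rm m r k : row_path m r -> r k = Rm -> 0 < k.
Proof. by case: k => // -[r0 _ _] /r0. Qed.

Lemma row_path_Rp m r k : row_path m r -> k < m -> r k = Rp -> k.+1 < m.
Proof.
move=> [_ rm _] lt_k_m rk; rewrite ltn_neqAle lt_k_m andbT.
by apply/eqP => eq_k1_m; case: rm; rewrite -eq_k1_m.
Qed.

Lemma adjacent_involution_shift m r :
  row_path m r -> adjacent_involution m (fun k => shift (r k) k).
Proof.
move=> r_path k lt_k_m; have [_ _ r_step] := r_path; case E: (r k) => /=.
- have k_gt0 := row_path_Rm r_path E.
  have -> : r k.-1 = Rp by apply/(r_step k.-1); rewrite prednK.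
  by rewrite /= prednK //; split=> //; lia.
- by rewrite E; split=> //; lia.
- have lt_k1_m := row_path_Rp r_path lt_k_m E.
  have -> : r k.+1 = Rm by apply/(r_step k lt_k1_m).
  by split=> //; lia.
Qed.

Lemma row_of_Rm a k : row_of a k = Rm <-> a < k.
Proof. by rewrite /row_of; case: ltngtP. Qed.

Lemma row_of_Rp a k : row_of a k = Rp <-> k < a.
Proof. by rewrite /row_of; case: ltngtP. Qed.

Lemma row_path_row_of m h :
  0 < m -> adjacent_involution m h -> row_path m (fun k => row_of (h k) k).
Proof.
move=> m_gt0 h_adj; split; rewrite ?row_of_Rm ?row_of_Rp.
- by rewrite ltn0.
- have /h_adj[lt_hm _ _] : m.-1 < m by rewrite ltn_predL.
  lia.
move=> k lt_k1_m; have [_ hhk near] := h_adj k (ltnW lt_k1_m).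
have [_ hhk1 near1] := h_adj k.+1 lt_k1_m.
rewrite row_of_Rm row_of_Rp; split=> lt_h.
- have hk : h k = k.+1 by lia.
  by rewrite -hk hhk.
- have hk1 : h k.+1 = k by lia.
  by rewrite -hk1 hhk1.
Qed.

Lemma edge_step P a b : edge P a b -> b.2 = a.2.+1 /\ (a.1 = Rp <-> b.1 = Rm).
Proof. by case: a b => [[] j] [[] j'] //= /andP[/andP[/eqP-> _] _]. Qed.

Lemma edge_of_step P r r' j : (r = Rp <-> r' = Rm) ->
  in_V P (r, j) -> in_V P (r', j.+1) -> edge P (r, j) (r', j.+1).
Proof.
case: r; case: r' => /= step;
  first [by case: (step.2 erefl) | by case: (step.1 erefl) | rewrite eqxx /=; lia].
Qed.

Lemma row_path_in_V P r k : row_path (size P) r -> k < size P -> in_V P (r k, k.+1).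
Proof.
move=> r_path lt_k_m; case E: (r k) => /=.
- by have := row_path_Rm r_path E; lia.
- lia.
- by have := row_path_Rp r_path lt_k_m E; lia.
Qed.

Lemma graph_match_of_row_path P T i r : 0 < size P -> size P <= i ->
  row_path (size P) r -> window_match P T i (fun k => shift (r k) k) ->
  graph_match P T i.
Proof.
move=> m_gt0 le_m_i r_path r_win; split=> //.
have r_in_V k : k < size P -> in_V P (r k, k.+1) by apply: row_path_in_V.
have [r0 rm r_step] := r_path.
exists (fun j => (r j.-1, j)); split.
- by case=> [|j] //= lt_j_m; apply: r_in_V.
- case=> [|j] //= lt_j1_m; apply: edge_of_step.
  + exact: r_step.
  + by apply: r_in_V; lia.
  + exact: r_in_V.
- by case E: (r 0) => /=; [case: r0 | left | right].
- by case E: (r (size P).-1); [left | right | case: rm].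
- by case=> [|j] // /andP[_ lt_j_m]; rewrite label_shift r_win.
Qed.

Lemma row_path_of_graph_match P T i : 0 < size P -> graph_match P T i ->
  exists r, row_path (size P) r /\ window_match P T i (fun k => shift (r k) k).
Proof.
move=> m_gt0 [le_m_i [u [_ u_edge u1 um u_label]]].
have u_col j : 1 <= j <= size P -> (u j).2 = j.
  elim: j => [//|j IHj /andP[_ le_j1_m]].
  case: j IHj le_j1_m => [_ _ | j IHj le_j2_m]; first by case: u1 => ->.
  have [-> _] := edge_step (u_edge j.+1 ltac:(lia)).
  by rewrite IHj //; lia.
have uE k : k < size P -> u k.+1 = ((u k.+1).1, k.+1).
  by move=> lt_k_m; have := u_col k.+1 ltac:(lia); case: (u k.+1) => r j /= ->.
exists (fun k => (u k.+1).1); split; first split.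
- by case: u1 => ->.
- by rewrite prednK //; case: um => ->.
- by move=> k lt_k1_m; have [_ ->] := edge_step (u_edge k.+1 ltac:(lia)).
by move=> k lt_k_m; rewrite -label_shift -uE // u_label //; lia.
Qed.

Lemma graph_match_iff P T i : 0 < size P -> (graph_match P T i <->
  size P <= i /\ exists h, adjacent_involution (size P) h /\ window_match P T i h).
Proof.
move=> m_gt0; split=> [g_match | [le_m_i [h [h_adj h_win]]]].
  have [r [r_path r_win]] := row_path_of_graph_match m_gt0 g_match.
  split; first by case: g_match.
  by exists (fun k => shift (r k) k); split; first exact: adjacent_involution_shift.
apply: (graph_match_of_row_path m_gt0 le_m_i (row_path_row_of m_gt0 h_adj)).
by move=> k lt_k_m; rewrite shift_row_of ?h_win //; case: (h_adj k lt_k_m).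
Qed.

End GraphMatch.

Theorem lemma1 (S : finType) (T P : seq S) (i : nat) :
  0 < size P -> 1 <= i <= size T ->
  swap_match P T i <-> graph_match P T i.
Proof. by move=> m_gt0 _; rewrite swap_match_iff graph_match_iff. Qed.
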